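(* Fix a model class $\mathcal M\subseteq\mathcal M^+$, $\bar M\in\mathcal M^+$ and $\varepsilon>0$, and set $\mathcal M'=\{M\in\mathcal M:f^{\bar M}(\pi_{\bar M})\le f^M(\pi_{\bar M})+\varepsilon\}$. Then $$\mathrm{dec}^{\mathrm c}_{\mathrm r,\varepsilon/\sqrt2}(\mathcal M,\bar M)\le\mathrm{dec}^{\mathrm c}_{\mathrm r,\varepsilon}(\mathcal M',\bar M)+\varepsilon.$$
   Context: Models are kernels $M:\Pi\to\Delta([0,1]\times\mathcal O)$ (rewards in $[0,1]$); $\mathcal M^+$ is the set of all models. $f^M(\pi)=\mathbb E_{(r,o)\sim M(\pi)}[r]$, $\pi_M\in\arg\max f^M$, $g^M(\pi)=f^M(\pi_M)-f^M(\pi)$; $D^2_H$ is squared Hellinger distance. Constrained regret DEC: $\mathrm{dec}^{\mathrm c}_{\mathrm r,\varepsilon}(\mathcal N,\bar M)=\inf_{p\in\Delta(\Pi)}\sup_{M\in\mathcal N}\{\mathbb E_{\pi\sim p}[g^M(\pi)]:\mathbb E_{\pi\sim p}[D^2_H(M(\pi),\bar M(\pi))]\le\varepsilon^2\}$ (value $0$ if no $M$ satisfies the constraint). *)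

From HB Require Import structures.
From mathcomp Require Import all_boot all_order all_algebra.
From mathcomp Require Import all_classical all_reals.
From mathcomp Require Import ereal topology normedtype sequences measure lebesgue_measure
  lebesgue_integral probability charge measurable_realfun kernel.

Set Implicit Arguments.
Unset Strict Implicit.
Unset Printing Implicit Defensive.

Import Order.TTheory GRing.Theory Num.Theory.
Local Open Scope classical_set_scope.
Local Open Scope ring_scope.
Local Open Scope ereal_scope.
Local Open Scope charge_scope.

Section hellinger.
Context {d : measure_display} {T : measurableType d} {R : realType}.
Context (P Q : probability T R).

Definition hell_nu : set T -> \bar R := measure_add P Q.
HB.instance Definition _ := Measure.copy hell_nu (measure_add P Q).

Let domfin : fin_num_fun hell_nu.
Proof.
move=> U mU; rewrite /hell_nu measure_addE fin_numD.
by rewrite !fin_num_measure.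
Qed.

HB.instance Definition _ := @Measure_isFinite.Build _ T R hell_nu domfin.

Definition hell_dom : {finite_measure set T -> \bar R} := hell_nu.

Definition hellinger2 : R :=
  fine (\int[hell_dom]_x
    (((Num.sqrt (fine (('d (charge_of_finite_measure P) '/d hell_dom) x))
       - Num.sqrt (fine (('d (charge_of_finite_measure Q) '/d hell_dom) x))) ^+ 2)%R)%:E).

End hellinger.

Section dec.
Context {R : realType} {dP dO : measure_display}
  {Pi : measurableType dP} {O : measurableType dO}.

(** a model assigns to every decision a distribution over
    (reward, observation) pairs in R x O *)
Definition model := Pi -> probability (R * O)%type R.

(** membership in M^+ : a (measurable) kernel whose rewards lie in [0,1] *)
Definition is_model (M : model) : Prop :=
  (forall pi, M pi [set x | (0 <= x.1 <= 1)%R] = 1) /\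
  (forall A, measurable A -> measurable_fun [set: Pi] (fun pi => M pi A)).

Definition fM (M : model) (pi : Pi) : R :=
  fine (\int[M pi]_x (x.1)%:E).

Definition is_argmax (M : model) (pi : Pi) : Prop :=
  forall pi', (fM M pi' <= fM M pi)%R.

(** g^M(pi), where piM M plays the role of pi_M *)
Definition gM (piM : model -> Pi) (M : model) (pi : Pi) : R :=
  (fM M (piM M) - fM M pi)%R.

(** constrained regret DEC; the sup over an empty feasible set is 0 *)
Definition dec_c (piM : model -> Pi) (eps : R) (N : set model) (Mbar : model)
    : \bar R :=
  ereal_inf [set
    ereal_sup (0 |` [set \int[p]_pi (gM piM M pi)%:E | M in
        [set M | N M /\
           \int[p]_pi (hellinger2 (M pi) (Mbar pi))%:E <= ((eps ^+ 2)%R)%:E]])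
    | p in [set: probability Pi R]].

End dec.

(** Given a design [p] for the [eps]-constrained problem over [M'], play
    [p' = (p + \delta_a) / 2] with [a = pi_Mbar] in the [eps / sqrt 2]-constrained
    problem over [M]. Mean rewards in [0, 1] are controlled by the Hellinger distance,
    [(f^M pi - f^Mbar pi)^2 <= D_H^2 (M pi, Mbar pi)], by AM-GM on the densities.
    If [E_p' D_H^2 <= eps^2 / 2] then [E_p D_H^2 <= eps^2], and the atom of [p'] at [a]
    gives [D_H^2 (M a, Mbar a) <= eps^2], so [M] belongs to [M']. As [Mbar] is
    maximised at [a], [g^M a - g^M pi <= |f^M pi - f^Mbar pi| + eps]; averaging over
    [p] gives [g^M a <= E_p g^M + 2 eps], i.e. [E_p' g^M <= E_p g^M + eps]. *)

From HB Require Import structures.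
From mathcomp Require Import all_boot all_order all_algebra.
From mathcomp Require Import all_classical all_reals.
From mathcomp Require Import ereal topology normedtype sequences measure lebesgue_measure
  lebesgue_integral probability charge measurable_realfun kernel.
From mathcomp Require Import realfun ring lra.

Set Implicit Arguments.
Unset Strict Implicit.
Unset Printing Implicit Defensive.

Import Order.TTheory GRing.Theory Num.Theory.
Local Open Scope classical_set_scope.
Local Open Scope ring_scope.
Local Open Scope charge_scope.

Lemma le_ereal_inf_adde {R : realType} {X : Type} (A : set X) (f : X -> \bar R) (x : \bar R) (e : R) :
  (forall y, A y -> (0 <= f y)%E) -> (forall y, A y -> (x <= f y + e%:E)%E) ->
  (x <= ereal_inf (f @` A) + e%:E)%E.
Proof.
move=> f0 le_x.
have : (0 <= ereal_inf (f @` A))%E by apply: le_ereal_inf_tmp => _ [y Ay <-]; exact: f0.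
case E : (ereal_inf (f @` A)) => [r| |] // _; last by rewrite addye // leey.
rewrite -lee_subel_addr // -E; apply: le_ereal_inf_tmp => _ [y Ay <-].
have := le_x y Ay; have := f0 y Ay; case: (f y) => [s| |] // _.
- by rewrite lee_subel_addr.
- by move=> _; exact: leey.
Qed.

Lemma measurable_sqrtr {d} {T : measurableType d} {R : realType} (f : T -> R) :
  measurable_fun setT f -> measurable_fun setT (fun x => Num.sqrt (f x)).
Proof.
move=> mf; apply: measurableT_comp mf.
exact: continuous_measurable_fun (@sqrt_continuous R).
Qed.

Section real_integrable.
Context {d : measure_display} {T : measurableType d} {R : realType}.
Variables (mu : {measure set T -> \bar R}) (D : set T).
Hypothesis mD : measurable D.

Lemma integrableRD (f g : T -> R) : mu.-integrable D (EFin \o f) ->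
  mu.-integrable D (EFin \o g) -> mu.-integrable D (EFin \o (fun x => f x + g x)).
Proof. exact: integrableD. Qed.

Lemma integrableRB (f g : T -> R) : mu.-integrable D (EFin \o f) ->
  mu.-integrable D (EFin \o g) -> mu.-integrable D (EFin \o (fun x => f x - g x)).
Proof. exact: integrableB. Qed.

Lemma integrableRZl (k : R) (f : T -> R) : mu.-integrable D (EFin \o f) ->
  mu.-integrable D (EFin \o (fun x => k * f x)).
Proof. exact: integrableZl. Qed.

End real_integrable.

Lemma integrable_bounded {d} {T : measurableType d} {R : realType}
    (mu : {finite_measure set T -> \bar R}) (f : T -> R) (K : R) :
  measurable_fun setT f -> (forall x, `|f x| <= K) -> mu.-integrable setT (EFin \o f).
Proof.
move=> mf fK.
apply: le_integrable (finite_measure_integrable_cst mu K measurableT) => //.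
  exact/measurable_EFinP.
by move=> x _ /=; rewrite lee_fin (le_trans (fK x)) ?ler_norm.
Qed.

Lemma EFin_Rintegral {d} {T : measurableType d} {R : realType}
    (mu : {measure set T -> \bar R}) (f : T -> R) :
  mu.-integrable setT (EFin \o f) -> (\int[mu]_x f x)%:E = (\int[mu]_x (f x)%:E)%E.
Proof. by move=> fi; rewrite fineK // integrable_fin_num. Qed.

(* No measurability of [g] is needed: the integral of a nonnegative function is
   the supremum of the integrals of the simple functions below it. *)
Lemma ge0_le_integral_nonmeasurable {d} {T : measurableType d} {R : realType}
    (mu : {measure set T -> \bar R}) (f g : T -> \bar R) :
  (forall x, 0 <= f x)%E -> (forall x, f x <= g x)%E ->
  (\int[mu]_x f x <= \int[mu]_x g x)%E.
Proof.
move=> f0 fg; have g0 x : (0 <= g x)%E := le_trans (f0 x) (fg x).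
rewrite (ge0_integralTE mu f0) (ge0_integralTE mu g0).
by apply: ereal_sup_le => _ [h hf <-]; exists h => //= x; exact: le_trans (hf x) (fg x).
Qed.

Lemma hellinger_integrand_bound (R : rcfType) (s phi p q t : R) :
  -1 <= s <= 1 -> 0 <= phi <= 1 -> 0 <= p -> 0 <= q -> 0 < t ->
  s * (phi * p - phi * q) <= (2 * t)^-1 * (Num.sqrt p - Num.sqrt q) ^+ 2
     + ((t / 4 + s / 2) * p + (t / 4 - s / 2) * q).
Proof.
move=> /andP[s1 s2] /andP[phi0 phi1] p0 q0 t0.
set a := Num.sqrt p; set b := Num.sqrt q; set u := s * (phi - 2^-1).
have a0 : 0 <= a by apply: sqrtr_ge0.
have b0 : 0 <= b by apply: sqrtr_ge0.
rewrite -[p](sqr_sqrtr p0) -[q](sqr_sqrtr q0) -/a -/b.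
have u2 : u ^+ 2 <= 4^-1.
  have s2le1 : s ^+ 2 <= 1 by nra.
  have phi2 : (phi - 2^-1) ^+ 2 <= 4^-1 by nra.
  by rewrite exprMn -[4^-1]mul1r ler_pM ?sqr_ge0.
have amgm : u * ((a - b) * (a + b)) <= (2 * t)^-1 * (a - b) ^+ 2 + t / 2 * u ^+ 2 * (a + b) ^+ 2.
  rewrite -subr_ge0 (_ : _ - _ = (2 * t)^-1 * ((a - b) - t * u * (a + b)) ^+ 2).
    by rewrite mulr_ge0 ?sqr_ge0 // invr_ge0; lra.
  by field; lra.
have sum2 : (a + b) ^+ 2 <= 2 * (a ^+ 2 + b ^+ 2).
  by have := sqr_ge0 (a - b); rewrite !expr2; nra.
have : t / 2 * u ^+ 2 * (a + b) ^+ 2 <= t / 4 * (a ^+ 2 + b ^+ 2).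
  have : u ^+ 2 * (a + b) ^+ 2 <= 4^-1 * (2 * (a ^+ 2 + b ^+ 2)).
    by apply: ler_pM; rewrite ?sqr_ge0.
  nra.
have -> : s * (phi * a ^+ 2 - phi * b ^+ 2) = u * ((a - b) * (a + b)) + s / 2 * (a ^+ 2 - b ^+ 2).
  by rewrite /u; field.
lra.
Qed.

Lemma sqr_le_of_forall_mul_le (R : realFieldType) (x D : R) : 0 <= D ->
  (forall s t, -1 <= s <= 1 -> 0 < t -> s * x <= (2 * t)^-1 * D + t / 2) ->
  x ^+ 2 <= D.
Proof.
move=> D0 le_x.
have [->|x_neq0] := eqVneq x 0; first by rewrite expr0n.
have norm_le t : 0 < t -> `|x| <= (2 * t)^-1 * D + t / 2.
  move=> t0; rewrite ler_norml lerNl -[x]mul1r -mulNr.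
  by rewrite !le_x // ?lexx; lra.
rewrite -real_normK ?num_real //; set y := `|x|.
have y0 : 0 < y by rewrite normr_gt0.
have := norm_le y y0; rewrite -/y.
have -> : (2 * y)^-1 * D + y / 2 = (D + y ^+ 2) / (2 * y) by field; lra.
by rewrite ler_pdivlMr ?mulr_gt0 //; nra.
Qed.

Section hellinger_density_bound.
Context {d : measure_display} {T : measurableType d} {R : realType}.
Variables (mu : {finite_measure set T -> \bar R}) (p q : T -> R).
Hypotheses (mp : measurable_fun setT p) (mq : measurable_fun setT q).
Hypotheses (p0 : forall x, 0 <= p x) (q0 : forall x, 0 <= q x).
Hypotheses (ip : mu.-integrable setT (EFin \o p)) (iq : mu.-integrable setT (EFin \o q)).
Hypotheses (p1 : \int[mu]_x p x = 1) (q1 : \int[mu]_x q x = 1).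

Let integrable_dominated (f : T -> R) (C : R) : measurable_fun setT f ->
  (forall x, `|f x| <= C * (p x + q x)) -> mu.-integrable setT (EFin \o f).
Proof.
move=> mf fC; have iC := integrableZl measurableT C (integrableD measurableT ip iq).
apply: le_integrable iC => //; first exact/measurable_EFinP.
by move=> x _ /=; rewrite lee_fin (le_trans (fC x)) ?ler_norm.
Qed.

Let integrable_pq (a b : R) : mu.-integrable setT (EFin \o (fun x => a * p x + b * q x)).
Proof. by apply: integrableRD => //; exact: integrableRZl. Qed.

Lemma hellinger_density_bound (phi : T -> R) (s t : R) : measurable_fun setT phi ->
  (forall x, 0 <= phi x <= 1) -> -1 <= s <= 1 -> 0 < t ->
  s * (\int[mu]_x (phi x * p x) - \int[mu]_x (phi x * q x)) <=
  (2 * t)^-1 * \int[mu]_x ((Num.sqrt (p x) - Num.sqrt (q x)) ^+ 2) + t / 2.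
Proof.
move=> mphi phi01 s1 t0.
have phi_le (r : T -> R) x : 0 <= r x -> `|phi x * r x| <= r x.
  move=> r0; have /andP[phi0 phi1] := phi01 x.
  by rewrite normrM !ger0_norm // ler_piMl.
have iphip : mu.-integrable setT (EFin \o (fun x => phi x * p x)).
  apply: (@integrable_dominated _ 1) => [|x]; first exact: measurable_funM.
  by rewrite mul1r (le_trans (phi_le _ _ (p0 x))) ?lerDl.
have iphiq : mu.-integrable setT (EFin \o (fun x => phi x * q x)).
  apply: (@integrable_dominated _ 1) => [|x]; first exact: measurable_funM.
  by rewrite mul1r (le_trans (phi_le _ _ (q0 x))) ?lerDr.
set h := fun x => (Num.sqrt (p x) - Num.sqrt (q x)) ^+ 2.
have ih : mu.-integrable setT (EFin \o h).
  apply: (@integrable_dominated _ 1) => [|x].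
    by apply/measurable_funX/measurable_funB; exact: measurable_sqrtr.
  rewrite mul1r ger0_norm ?sqr_ge0 // /h.
  set a := Num.sqrt (p x); set b := Num.sqrt (q x).
  have a0 : 0 <= a by apply: sqrtr_ge0.
  have b0 : 0 <= b by apply: sqrtr_ge0.
  by rewrite -(sqr_sqrtr (p0 x)) -(sqr_sqrtr (q0 x)) -/a -/b; nra.
have ilhs := integrableRZl measurableT s (integrableRB measurableT iphip iphiq).
have irhs := integrableRD measurableT (integrableRZl measurableT (2 * t)^-1 ih)
  (integrable_pq (t / 4 + s / 2) (t / 4 - s / 2)).
rewrite -RintegralB // -RintegralZl //; last exact: integrableRB.
apply: le_trans (le_Rintegral measurableT ilhs irhs _) _ => [x _|].
  exact: hellinger_integrand_bound s1 (phi01 x) (p0 x) (q0 x) t0.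
rewrite RintegralD //; last exact: integrableRZl.
rewrite RintegralZl // RintegralD ?RintegralZl //; try exact: integrableRZl.
by rewrite p1 q1 lerD2l; lra.
Qed.

End hellinger_density_bound.

Section rn_density.
Context {d : measure_display} {T : measurableType d} {R : realType}.
Variables (nu P : {finite_measure set T -> \bar R}).
Hypothesis Pnu : P `<< nu.
Local Notation f := (Radon_Nikodym_SigmaFinite.f P nu).

Definition rn_dens x : R := fine (f x).

Let rn_densE x : f x = (rn_dens x)%:E.
Proof. by rewrite /rn_dens fineK // Radon_Nikodym_SigmaFinite.f_fin_num. Qed.

Lemma rn_dens_ge0 x : 0 <= rn_dens x.
Proof. by rewrite -lee_fin -rn_densE Radon_Nikodym_SigmaFinite.f_ge0. Qed.

Lemma integrable_rn_dens : nu.-integrable setT (EFin \o rn_dens).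
Proof.
have := Radon_Nikodym_SigmaFinite.f_integrable Pnu.
by apply: eq_integrable => // x _ /=; rewrite -rn_densE.
Qed.

Lemma measurable_rn_dens : measurable_fun setT rn_dens.
Proof. exact/measurable_EFinP/(measurable_int _ integrable_rn_dens). Qed.

Lemma integral_rn_dens : (\int[nu]_x (rn_dens x)%:E = P setT)%E.
Proof.
rewrite (Radon_Nikodym_SigmaFinite.f_integral Pnu) //.
by apply: eq_integral => x _; rewrite -rn_densE.
Qed.

Lemma integral_rn_dens_change (phi : T -> R) : measurable_fun setT phi ->
  (forall x, 0 <= phi x) ->
  (\int[P]_x (phi x)%:E = \int[nu]_x (phi x * rn_dens x)%:E)%E.
Proof.
move=> mphi phi0.
rewrite -(Radon_Nikodym_SigmaFinite.change_of_variables Pnu) //.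
- by apply: eq_integral => x _; rewrite rn_densE.
- exact/measurable_EFinP.
Qed.

Lemma Radon_Nikodym_ae_rn_dens :
  ae_eq nu setT (fun x => fine ('d (charge_of_finite_measure P) '/d nu x)) rn_dens.
Proof.
apply: filterS (ae_eq_Radon_Nikodym_SigmaFinite Pnu measurableT) => x dE /dE.
by rewrite /rn_dens => ->.
Qed.

End rn_density.

Section hellinger2_bounds.
Context {d : measure_display} {T : measurableType d} {R : realType}.
Variables (P Q : probability T R).
Local Notation nu := (hell_dom P Q).

Lemma hell_dom_dominatesl : P `<< nu.
Proof.
move=> N nN A mA AN; have := nN A mA AN.
rewrite /hell_dom /= /hell_nu measure_addE => /eqP.
by rewrite padde_eq0 ?measure_ge0 // => /andP[/eqP -> _].
Qed.

Lemma hell_dom_dominatesr : Q `<< nu.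
Proof.
move=> N nN A mA AN; have := nN A mA AN.
rewrite /hell_dom /= /hell_nu measure_addE => /eqP.
by rewrite padde_eq0 ?measure_ge0 // => /andP[_ /eqP ->].
Qed.

Local Notation p := (rn_dens nu P).
Local Notation q := (rn_dens nu Q).

Lemma hellinger2E :
  hellinger2 P Q = \int[nu]_x ((Num.sqrt (p x) - Num.sqrt (q x)) ^+ 2).
Proof.
have mP := measurable_rn_dens hell_dom_dominatesl.
have mQ := measurable_rn_dens hell_dom_dominatesr.
rewrite /hellinger2 /Rintegral; congr fine.
apply: ae_eq_integral => //.
- apply/measurable_EFinP/measurable_funX/measurable_funB; apply: measurable_sqrtr;
    apply: measurableT_comp; try exact: fine_measurable; apply: measurable_int;
    apply: Radon_Nikodym_integrable; [exact: hell_dom_dominatesl|exact: hell_dom_dominatesr].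
- by apply/measurable_EFinP/measurable_funX/measurable_funB; exact: measurable_sqrtr.
- apply: filterS2 (Radon_Nikodym_ae_rn_dens hell_dom_dominatesl)
    (Radon_Nikodym_ae_rn_dens hell_dom_dominatesr) => x eP eQ _.
  by rewrite (eP I) (eQ I).
Qed.

Let Rintegral_rn_dens (A : probability T R) : A `<< nu -> \int[nu]_x rn_dens nu A x = 1.
Proof.
move=> Anu; rewrite /Rintegral integral_rn_dens // [X in fine X](_ : _ = 1%E) //.
exact: probability_setT.
Qed.

Lemma hellinger2_mean_bound (phi : T -> R) (s t : R) : measurable_fun setT phi ->
  (forall x, 0 <= phi x <= 1) -> -1 <= s <= 1 -> 0 < t ->
  s * (fine (\int[P]_x (phi x)%:E) - fine (\int[Q]_x (phi x)%:E)) <=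
  (2 * t)^-1 * hellinger2 P Q + t / 2.
Proof.
move=> mphi phi01 s1 t0; have phi0 x : 0 <= phi x by case/andP: (phi01 x).
have [domP domQ] := (hell_dom_dominatesl, hell_dom_dominatesr).
rewrite hellinger2E (integral_rn_dens_change domP) // (integral_rn_dens_change domQ) //.
by apply: hellinger_density_bound => //; first [exact: measurable_rn_dens
  | exact: rn_dens_ge0 | exact: integrable_rn_dens | exact: Rintegral_rn_dens].
Qed.

Lemma hellinger2_ge0 : 0 <= hellinger2 P Q.
Proof. by rewrite /hellinger2 fine_ge0 // integral_ge0 // => x _; rewrite lee_fin sqr_ge0. Qed.

Lemma sqr_mean_diff_le_hellinger2 (phi : T -> R) : measurable_fun setT phi ->
  (forall x, 0 <= phi x <= 1) ->
  (fine (\int[P]_x (phi x)%:E) - fine (\int[Q]_x (phi x)%:E)) ^+ 2 <= hellinger2 P Q.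
Proof.
move=> mphi phi01; apply: sqr_le_of_forall_mul_le hellinger2_ge0 _ => s t s1 t0.
exact: hellinger2_mean_bound.
Qed.

End hellinger2_bounds.

Section models.
Context {R : realType} {dP dO : measure_display}
  {Pi : measurableType dP} {O : measurableType dO}.
Implicit Types M : @model R dP dO Pi O.

Definition clip01 (x : (R * O)%type) : R := Num.min (Num.max x.1 0) 1.

Lemma measurable_clip01 : measurable_fun setT clip01.
Proof.
apply: (measurable_minr (f := fun x : (R * O)%type => Num.max x.1 0) (g := cst 1)).
  apply: (measurable_maxr (f := fst) (g := cst 0)) => //; exact: measurable_fst.
exact: measurable_cst.
Qed.

Lemma clip01_itv x : 0 <= clip01 x <= 1.
Proof. by rewrite le_min ler01 le_max lexx orbT ge_min lexx orbT. Qed.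

Lemma measurable_rewards01 : measurable [set x : (R * O)%type | 0 <= x.1 <= 1].
Proof.
have := measurable_fst measurableT _ (measurable_itv `[(0:R), 1]).
by move=> /(_ _ O); rewrite setTI.
Qed.

(* [x.1] is unbounded on [R * O]; clipping it, which changes nothing [M pi]-a.s.,
   gives a bounded integrand. *)
Lemma fM_clip01 M pi : is_model M -> fM M pi = fine (\int[M pi]_x (clip01 x)%:E).
Proof.
move=> [M01 _]; rewrite /fM; congr fine.
apply: ae_eq_integral => //.
- by apply/measurable_EFinP; exact: measurable_fst.
- by apply/measurable_EFinP; exact: measurable_clip01.
- exists (~` [set x | 0 <= x.1 <= 1]); split.
  + exact: measurableC measurable_rewards01.
  + by move: (probability_setC (M pi) measurable_rewards01); rewrite M01 subee.
  + move=> x /= nclip x01; apply: nclip => _; move: x01 => /andP[x0 x1].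
    by rewrite /clip01 (max_l x0) (min_l x1).
Qed.

Lemma fM_itv M pi : is_model M -> 0 <= fM M pi <= 1.
Proof.
move=> hM; rewrite fM_clip01 //.
have clip0 x : (0 <= (clip01 x)%:E)%E by rewrite lee_fin; case/andP: (clip01_itv x).
have i0 : (0 <= \int[M pi]_x (clip01 x)%:E)%E by exact: integral_ge0.
have i1 : (\int[M pi]_x (clip01 x)%:E <= \int[M pi]_x (cst 1%:E) x)%E.
  apply: ge0_le_integral => //; first by apply/measurable_EFinP; exact: measurable_clip01.
  by move=> x _; rewrite lee_fin; case/andP: (clip01_itv x).
rewrite integral_cst // [X in (_ * X)%E](_ : _ = 1%E) ?mule1 in i1; last exact: probability_setT.
by rewrite -!lee_fin fineK ?i0 ?i1 // ge0_fin_numE // (le_lt_trans i1) ?ltry.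
Qed.

Lemma measurable_fM M : is_model M -> measurable_fun setT (fM M).
Proof.
move=> hM; rewrite (_ : fM M = fun pi => fine (\int[M pi]_x (clip01 x)%:E)); last first.
  by apply/funext => pi; rewrite fM_clip01.
apply: measurableT_comp; first exact: fine_measurable.
apply: (measurable_fun_integral_kernel (l := fun pi => (M pi : measure _ R))).
- by case: hM.
- by move=> x; rewrite lee_fin; case/andP: (clip01_itv x).
- by apply/measurable_EFinP; exact: measurable_clip01.
Qed.

Lemma sqr_fM_diff_le_hellinger2 M Mbar pi : is_model M -> is_model Mbar ->
  (fM M pi - fM Mbar pi) ^+ 2 <= hellinger2 (M pi) (Mbar pi).
Proof.
move=> hM hMbar; rewrite (fM_clip01 _ hM) (fM_clip01 _ hMbar).
exact: sqr_mean_diff_le_hellinger2 measurable_clip01 clip01_itv.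
Qed.

End models.

Section mix_dirac.
Import HBNNSimple.
Context {d : measure_display} {T : measurableType d} {R : realType}.
Variables (p : probability T R) (a : T).

Let half : {nonneg R} := (2^-1)%:nng.
Let mix := measure_add (mscale half p) (mscale half \d_a).
HB.instance Definition _ := Measure.copy mix (measure_add (mscale half p) (mscale half \d_a)).

Let mix_setT : (mix setT = 1)%E.
Proof.
rewrite /mix measure_addE.
rewrite (_ : _ + _ = (2^-1)%:E * p setT + (2^-1)%:E * \d_a setT)%E //.
rewrite [p setT]probability_setT diracE in_setT mule1 -EFinD.
by congr (_%:E); field.
Qed.

HB.instance Definition _ := Measure_isProbability.Build _ _ _ mix mix_setT.

Definition mix_dirac : probability T R := mix.

Lemma integral_mix_dirac (f : T -> \bar R) : measurable_fun setT f -> (forall x, 0 <= f x)%E ->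
  (\int[mix_dirac]_x f x = (2^-1)%:E * \int[p]_x f x + (2^-1)%:E * f a)%E.
Proof.
move=> mf f0; rewrite /mix_dirac /= /mix ge0_integral_measure_add //.
by rewrite !ge0_integral_mscale // integral_dirac // diracE in_setT mul1e.
Qed.

Lemma integral_le_mix_dirac (g : T -> \bar R) : (forall x, 0 <= g x)%E ->
  (\int[p]_x g x <= 2%:E * \int[mix_dirac]_x g x)%E.
Proof.
move=> g0; rewrite [X in (X <= _)%E](ge0_integralTE p g0) /=.
apply: ge_ereal_sup => _ [h hg <-].
have h0 x : (0 <= (h x)%:E)%E by rewrite lee_fin.
have mh : measurable_fun setT (fun x => (h x)%:E) by exact/measurable_EFinP.
have -> : sintegral p h = (\int[p]_x (h x)%:E)%E by rewrite integral_nnsfun // patch_setT.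
apply: (@le_trans _ _ (2%:E * \int[mix_dirac]_x (h x)%:E)%E); last first.
  by rewrite lee_pmul2l ?lte_fin // ge0_le_integral_nonmeasurable.
rewrite integral_mix_dirac // muleDr //.
  by rewrite muleA -EFinM mulfV // mul1e leeDl // !mule_ge0.
by apply: ge0_adde_def; rewrite inE; apply: mule_ge0 => //; exact: integral_ge0.
Qed.

End mix_dirac.

Section mix_dirac_feasible.
Context {R : realType} {dP dO : measure_display}
  {Pi : measurableType dP} {O : measurableType dO}.
Variables (M Mbar : @model R dP dO Pi O) (piM : @model R dP dO Pi O -> Pi).
Variables (eps : R) (p : probability Pi R).
Hypotheses (hM : is_model M) (hMbar : is_model Mbar).
Hypotheses (argM : is_argmax M (piM M)) (argMbar : is_argmax Mbar (piM Mbar)).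
Hypothesis eps0 : 0 < eps.

Local Notation a := (piM Mbar).
Local Notation D pi := (hellinger2 (M pi) (Mbar pi)).
Local Notation u pi := (fM M pi - fM Mbar pi).
Local Notation g := (gM piM M).

Hypothesis feasible : (\int[mix_dirac p a]_pi (D pi)%:E <= ((eps / Num.sqrt 2) ^+ 2)%:E)%E.

Let measurable_u2 : measurable_fun setT (fun pi => u pi ^+ 2).
Proof. by apply/measurable_funX/measurable_funB; exact: measurable_fM. Qed.

(* [pi |-> D pi] is not known to be measurable, so its integrals are only compared
   with those of the measurable minorant [u ^+ 2]. *)
Let u2_le_D pi : ((u pi ^+ 2)%:E <= (D pi)%:E)%E.
Proof. by rewrite lee_fin sqr_fM_diff_le_hellinger2. Qed.

Let u2_ge0 pi : (0 <= (u pi ^+ 2)%:E)%E.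
Proof. by rewrite lee_fin sqr_ge0. Qed.

Lemma mix_dirac_feasible_gap : fM Mbar a <= fM M a + eps.
Proof.
have half_u2 : ((2^-1 * u a ^+ 2)%:E <= (eps ^+ 2 / 2)%:E)%E.
  have -> : eps ^+ 2 / 2 = (eps / Num.sqrt 2) ^+ 2 by rewrite expr_div_n sqr_sqrtr.
  apply: le_trans feasible.
  apply: le_trans (ge0_le_integral_nonmeasurable _ u2_ge0 u2_le_D).
  rewrite integral_mix_dirac //; last exact/measurable_EFinP.
  by rewrite EFinM leeDr // mule_ge0 // integral_ge0.
rewrite lee_fin in half_u2.
have {half_u2} : u a ^+ 2 <= eps ^+ 2 by lra.
move=> /ler_wsqrtr; rewrite !sqrtr_sqr (gtr0_norm eps0) ler_norml => /andP[+ _].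
lra.
Qed.

Lemma mix_dirac_feasible_radius : (\int[p]_pi (D pi)%:E <= (eps ^+ 2)%:E)%E.
Proof.
have D0 pi : (0 <= (D pi)%:E)%E by rewrite lee_fin hellinger2_ge0.
apply: le_trans (integral_le_mix_dirac p a D0) _.
have -> : eps ^+ 2 = 2 * (eps / Num.sqrt 2) ^+ 2.
  by rewrite expr_div_n sqr_sqrtr //; field.
by rewrite EFinM lee_pmul2l // lte_fin.
Qed.

Let g_itv pi : 0 <= g pi <= 1.
Proof.
have := argM pi; have := fM_itv pi hM; have := fM_itv (piM M) hM.
by rewrite /gM => /andP[? ?] /andP[? ?] ?; apply/andP; split; lra.
Qed.

Let measurable_g : measurable_fun setT g.
Proof. by apply: measurable_funB; [exact: measurable_cst | exact: measurable_fM]. Qed.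

(* [g a - g pi = fM M pi - fM M a <= u pi + eps], as [fM Mbar pi <= fM Mbar a] and
   [fM Mbar a <= fM M a + eps]; then AM-GM on [u pi]. *)
Let g_anchor_le pi : g a <= g pi + (2 * eps)^-1 * u pi ^+ 2 + 3 * eps / 2.
Proof.
have gap := mix_dirac_feasible_gap; have := argMbar pi.
have amgm : u pi <= (2 * eps)^-1 * u pi ^+ 2 + eps / 2.
  rewrite -subr_ge0 (_ : _ - _ = (2 * eps)^-1 * (u pi - eps) ^+ 2).
    by rewrite mulr_ge0 ?sqr_ge0 // invr_ge0 mulr_ge0 // ltW.
  by field; exact: lt0r_neq0.
rewrite /gM; lra.
Qed.

Lemma mix_dirac_feasible_regret :
  (\int[mix_dirac p a]_pi (g pi)%:E <= \int[p]_pi (g pi)%:E + eps%:E)%E.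
Proof.
have ig : p.-integrable setT (EFin \o g).
  apply: (@integrable_bounded _ _ _ _ _ 1) measurable_g _ => pi.
  by rewrite ger0_norm; case/andP: (g_itv pi).
have iu2 : p.-integrable setT (EFin \o (fun pi => u pi ^+ 2)).
  apply: (@integrable_bounded _ _ _ _ _ 1) measurable_u2 _ => pi.
  rewrite ger0_norm ?sqr_ge0 // -real_normK ?num_real // exprn_ile1 // ler_norml.
  have := fM_itv pi hM; have := fM_itv pi hMbar.
  by move=> /andP[? ?] /andP[? ?]; apply/andP; split; lra.
have int_u2 : \int[p]_pi (u pi ^+ 2) <= eps ^+ 2.
  rewrite -lee_fin EFin_Rintegral //; apply: le_trans mix_dirac_feasible_radius.
  exact: ge0_le_integral_nonmeasurable.
have ga_le : g a <= \int[p]_pi g pi + 2 * eps.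
  have icst c := finite_measure_integrable_cst p c measurableT.
  have iu2' := integrableRZl measurableT (2 * eps)^-1 iu2.
  have := le_Rintegral measurableT (icst (g a))
    (integrableRD measurableT (integrableRD measurableT ig iu2') (icst (3 * eps / 2)))
    (fun pi _ => g_anchor_le pi).
  rewrite (RintegralD measurableT _ (icst _)); last exact: integrableRD.
  rewrite (RintegralD measurableT ig iu2') RintegralZl // !Rintegral_cst //.
  have -> : fine (p setT) = 1 by rewrite probability_setT.
  have : (2 * eps)^-1 * \int[p]_pi (u pi ^+ 2) <= eps / 2.
    have -> : eps / 2 = (2 * eps)^-1 * eps ^+ 2 by field; exact: lt0r_neq0.
    by rewrite ler_wpM2l // invr_ge0 mulr_ge0 // ltW.
  lra.
rewrite integral_mix_dirac //; first last.
- by move=> pi; rewrite lee_fin; case/andP: (g_itv pi).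
- exact/measurable_EFinP.
rewrite -EFin_Rintegral // -!EFinM -!EFinD lee_fin; lra.
Qed.

End mix_dirac_feasible.

Lemma dec_c_le_adde {R : realType} {dP dO : measure_display}
    {Pi : measurableType dP} {O : measurableType dO}
    (piM : @model R dP dO Pi O -> Pi) (eps eps' e : R) (N N' : set (@model R dP dO Pi O))
    (Mbar : @model R dP dO Pi O) (q : probability Pi R -> probability Pi R) :
  0 <= e ->
  (forall p M, N M ->
     (\int[q p]_pi (hellinger2 (M pi) (Mbar pi))%:E <= (eps ^+ 2)%:E)%E ->
     [/\ N' M, (\int[p]_pi (hellinger2 (M pi) (Mbar pi))%:E <= (eps' ^+ 2)%:E)%E
       & (\int[q p]_pi (gM piM M pi)%:E <= \int[p]_pi (gM piM M pi)%:E + e%:E)%E]) ->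
  (dec_c piM eps N Mbar <= dec_c piM eps' N' Mbar + e%:E)%E.
Proof.
move=> e0 reduce; apply: le_ereal_inf_adde => [p _|p _].
  by apply: ereal_sup_ubound; left.
apply: le_trans (ereal_inf_lbound _) _; first by exists (q p).
apply: ge_ereal_sup => _ [-> | [M [NM feasible] <-]].
  by rewrite adde_ge0 ?lee_fin //; apply: ereal_sup_ubound; left.
have [N'M feasible' le_regret] := reduce p M NM feasible.
by apply: le_trans le_regret _; rewrite leeD2r //; apply: ereal_sup_ubound; right; exists M.
Qed.

Theorem lemmaD2 (R : realType) (dP dO : measure_display)
  (Pi : measurableType dP) (O : measurableType dO)
  (Mclass : set (@model R dP dO Pi O)) (Mbar : @model R dP dO Pi O)
  (piM : @model R dP dO Pi O -> Pi) (eps : R) :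
  (forall M, Mclass M -> is_model M) ->
  is_model Mbar ->
  (forall M, Mclass M -> is_argmax M (piM M)) ->
  is_argmax Mbar (piM Mbar) ->
  0 < eps ->
  let Mclass' := [set M | Mclass M /\ fM Mbar (piM Mbar) <= fM M (piM Mbar) + eps] in
  (dec_c piM (eps / Num.sqrt 2) Mclass Mbar <= dec_c piM eps Mclass' Mbar + eps%:E)%E.
Proof.
move=> models hMbar argmaxes argMbar eps0; rewrite [is_true _]/=.
apply: (dec_c_le_adde (ltW eps0) (q := mix_dirac ^~ (piM Mbar))) => p M hM feasible.
have [hM' argM] := (models M hM, argmaxes M hM).
split; first split => //.
- exact: mix_dirac_feasible_gap feasible.
- exact: mix_dirac_feasible_radius feasible.
- exact: mix_dirac_feasible_regret feasible.
Qed.
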